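(* Every $\lambda^\star$-practical number is $\lambda$-practical.
   Context: $\lambda$ is the Carmichael function ($\lambda(n)$ is the least positive integer $m$ with $a^m\equiv1\pmod n$ for all $a$ coprime to $n$) and $\varphi$ is Euler's totient. A positive integer $n$ is $\lambda^\star$-practical if every positive integer $m\le\sum_{d\mid n}\lambda(d)$ can be written as $\sum_{d\in\mathcal{D}}\lambda(d)$ for some set $\mathcal{D}$ of distinct positive divisors of $n$. A positive integer $n$ is $\lambda$-practical if every integer $m$ with $1\le m\le n$ can be written as $m=\sum_{d\mid n}\lambda(d)m_d$ with integers $0\le m_d\le \varphi(d)/\lambda(d)$. *)

From mathcomp Require Import all_boot.
From mathcomp Require Import cyclic.
Set Implicit Arguments. Unset Strict Implicit. Unset Printing Implicit Defensive.

(* Condition "a^m = 1 (mod n) for all a coprime to n", checked on the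
   residues a < n (the condition only depends on a mod n). *)
Definition carm_pred (n : nat) : pred nat := fun m =>
  (0 < m) && [forall a : 'I_n, coprime a n ==> (a ^ m == 1 %[mod n])].

Lemma carm_exists n : exists m, carm_pred n m.
Proof.
case: n => [|n].
  by exists 1; apply/andP; split => //; apply/forallP => -[].
exists (totient n.+1); apply/andP; split; first by rewrite totient_gt0.
apply/forallP => a; apply/implyP => Ha; apply/eqP; exact: Euler_exp_totient.
Qed.

Definition carmichael (n : nat) : nat := ex_minn (carm_exists n).

Definition lambda_star_practical (n : nat) : Prop :=
  0 < n /\
  forall m, 1 <= m <= \sum_(d <- divisors n) carmichael d ->
    exists D : seq nat, [/\ uniq D, {subset D <= divisors n} &
      m = \sum_(d <- D) carmichael d].

Definition lambda_practical (n : nat) : Prop :=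
  0 < n /\
  forall m, 1 <= m <= n ->
    exists md : nat -> nat,
      (forall d, d \in divisors n -> md d <= totient d %/ carmichael d) /\
      m = \sum_(d <- divisors n) carmichael d * md d.

From mathcomp Require Import all_boot.
From mathcomp Require Import cyclic.

Set Implicit Arguments.
Unset Strict Implicit.
Unset Printing Implicit Defensive.

(* Write k(d) = phi(d)/lambda(d); it is a positive integer because lambda(d)
   divides phi(d), and sum_(d | n) lambda(d) k(d) = sum_(d | n) phi(d) = n.
   lambda*-practicality says that every m up to sum_(d | n) lambda(d) is a sum
   of lambda(d) with each multiplicity at most 1.  Raising one multiplicity
   bound from c to c + 1 preserves this completeness as long as the new summand
   lambda(d) is at most one more than the current total, which always holds
   once every bound is positive; raising the bounds one step at a time up to
   k yields every m <= n with multiplicities at most k(d). *)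

Lemma carmichaelP n :
  carm_pred n (carmichael n) /\ forall m, carm_pred n m -> carmichael n <= m.
Proof. by rewrite /carmichael; case: ex_minnP. Qed.

Lemma carmichael_gt0 n : 0 < carmichael n.
Proof. by case: (carmichaelP n) => /andP[]. Qed.

Lemma carm_pred_totient n : 0 < n -> carm_pred n (totient n).
Proof.
case: n => [//|n] _; apply/andP; split; first by rewrite totient_gt0.
apply/forallP => a; apply/implyP => co_a; apply/eqP.
exact: Euler_exp_totient.
Qed.

Lemma carm_pred_modn n m l :
  carm_pred n m -> carm_pred n l -> 0 < m %% l -> carm_pred n (m %% l).
Proof.
move=> /andP[_ /forallP pred_m] /andP[_ /forallP pred_l] r_gt0.
apply/andP; split=> //; apply/forallP => a; apply/implyP => co_a.
move: (pred_m a) (pred_l a); rewrite co_a /= => /eqP am1 /eqP al1; apply/eqP.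
have split_m : a ^ m = (a ^ l) ^ (m %/ l) * a ^ (m %% l).
  by rewrite -expnM -expnD mulnC -divn_eq.
rewrite -am1 split_m -modnMml -[(a ^ l) ^ _ %% n]modnXm al1.
by rewrite modnXm exp1n modnMml mul1n.
Qed.

Lemma carmichael_dvd n m : carm_pred n m -> carmichael n %| m.
Proof.
move=> pred_m; have [pred_lambda lambda_min] := carmichaelP n.
have [r0 | r_gt0] := posnP (m %% carmichael n); first exact/eqP.
have := lambda_min _ (carm_pred_modn pred_m pred_lambda r_gt0).
by rewrite leqNgt ltn_pmod ?carmichael_gt0.
Qed.

Lemma carmichael_dvd_totient n : 0 < n -> carmichael n %| totient n.
Proof. by move=> n_gt0; apply/carmichael_dvd/carm_pred_totient. Qed.

Lemma sum_totient_divisors n : 0 < n -> \sum_(d <- divisors n) totient d = n.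
Proof.
move=> n_gt0; rewrite -[RHS]sum_totient_dvd -(big_mkord (fun d => d %| n)).
rewrite -[RHS]big_filter; apply: perm_big; apply: uniq_perm.
- exact: divisors_uniq.
- by rewrite filter_uniq ?iota_uniq.
move=> d; rewrite mem_filter mem_iota -dvdn_divisors //= subn0 ltnS andb_idr //.
exact: dvdn_leq.
Qed.

Section BoundedSubsetSums.

Variable ds : seq nat.
Hypothesis ds_uniq : uniq ds.
Variable lam : nat -> nat.

Definition capacity_sum (c : nat -> nat) : nat := \sum_(d <- ds) lam d * c d.

Definition complete (c : nat -> nat) : Prop :=
  forall m, m <= capacity_sum c ->
    exists md : nat -> nat,
      (forall d, d \in ds -> md d <= c d) /\ m = \sum_(d <- ds) lam d * md d.

Lemma capacity_sum_eq_in c c' :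
  {in ds, c =1 c'} -> capacity_sum c = capacity_sum c'.
Proof. by move=> eq_c; apply: eq_big_seq => d /eq_c ->. Qed.

Lemma complete_eq_in c c' : {in ds, c =1 c'} -> complete c -> complete c'.
Proof.
move=> eq_c complete_c m; rewrite -(capacity_sum_eq_in eq_c) => /complete_c.
by case=> md [md_le ->]; exists md; split=> // d ds_d; rewrite -eq_c ?md_le.
Qed.

Lemma capacity_sum_incr c d0 : d0 \in ds ->
  capacity_sum (fun d => c d + (d == d0)) = capacity_sum c + lam d0.
Proof.
move=> ds_d0; rewrite /capacity_sum !(bigD1_seq d0) //= eqxx mulnDr muln1.
rewrite addnAC; congr (_ + _ + _); apply: eq_bigr => d /negbTE ->.
by rewrite addn0.
Qed.

Lemma complete_incr c d0 : d0 \in ds -> lam d0 <= (capacity_sum c).+1 ->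
  complete c -> complete (fun d => c d + (d == d0)).
Proof.
move=> ds_d0 lam_d0_le complete_c m; rewrite capacity_sum_incr // => le_m.
have [m_small | m_large] := leqP m (capacity_sum c).
  have [md [md_le ->]] := complete_c m m_small.
  by exists md; split=> // d ds_d; rewrite (leq_trans (md_le d ds_d)) ?leq_addr.
have [|md [md_le m_eq]] := complete_c (m - lam d0).
  by rewrite leq_subLR addnC.
exists (fun d => md d + (d == d0)); split.
  by move=> d ds_d; rewrite leq_add2r md_le.
have := capacity_sum_incr md ds_d0; rewrite /capacity_sum => ->.
by rewrite -m_eq subnK // (leq_trans lam_d0_le).
Qed.

Lemma complete_addn c d0 j : d0 \in ds -> 0 < c d0 ->
  complete c -> complete (fun d => c d + (d == d0) * j).
Proof.
move=> ds_d0 c_d0_gt0 complete_c; elim: j => [|j IHj].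
  by apply: complete_eq_in complete_c => d _; rewrite muln0 addn0.
apply: complete_eq_in (complete_incr ds_d0 _ IHj) => [d _|].
  by rewrite mulnS (addnC (d == d0)) addnA.
apply: leqW; rewrite /capacity_sum (bigD1_seq d0) //= eqxx mul1n.
by rewrite (leq_trans (leq_pmulr _ _) (leq_addr _ _)) // ltn_addr.
Qed.

Lemma complete_raise c c' : {in ds, forall d, 0 < c d <= c' d} ->
  complete c -> complete c'.
Proof.
move=> c_le complete_c.
pose raised (s : seq nat) d := if d \in s then c' d else c d.
suff complete_raised s : {subset s <= ds} -> complete (raised s).
  apply: complete_eq_in (complete_raised ds _) => // d ds_d.
  by rewrite /raised ds_d.
elim: s => [|x s IHs] sub_s; first exact: complete_eq_in complete_c.
have ds_x : x \in ds by apply: sub_s; rewrite mem_head.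
have {IHs}complete_s : complete (raised s).
  by apply: IHs => d s_d; apply: sub_s; rewrite in_cons s_d orbT.
have [s_x | s_x] := boolP (x \in s).
  apply: complete_eq_in complete_s => d _; rewrite /raised in_cons.
  by case: eqP => // ->; rewrite s_x.
have /andP[c_x_gt0 c_x_le] := c_le x ds_x.
have raised_x_gt0 : 0 < raised s x by rewrite /raised (negbTE s_x).
have := complete_addn (j := c' x - c x) ds_x raised_x_gt0 complete_s.
apply: complete_eq_in.
move=> d _; rewrite /raised in_cons; case: eqP => [-> | _] /=.
  by rewrite (negbTE s_x) mul1n subnKC.
by rewrite mul0n addn0.
Qed.

Lemma sum_subset_indicator (D : seq nat) : uniq D -> {subset D <= ds} ->
  \sum_(d <- D) lam d = \sum_(d <- ds) lam d * (d \in D).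
Proof.
move=> D_uniq sub_D.
have D_filter : perm_eq D [seq d <- ds | d \in D].
  apply: uniq_perm; rewrite ?filter_uniq // => d.
  by rewrite mem_filter; case: (boolP (d \in D)) => // /sub_D.
rewrite (perm_big _ D_filter) big_filter big_mkcond.
by apply: eq_bigr => d _; case: (d \in D); rewrite ?muln1 ?muln0.
Qed.

Lemma complete_ones :
  (forall m, 1 <= m <= \sum_(d <- ds) lam d ->
     exists D : seq nat,
       [/\ uniq D, {subset D <= ds} & m = \sum_(d <- D) lam d]) ->
  complete (fun _ => 1).
Proof.
move=> subset_sums [_|m].
  by exists (fun _ => 0); rewrite big1 // => d _; rewrite muln0.
rewrite /capacity_sum (eq_bigr _ (fun d _ => muln1 (lam d))) => le_m.
have [D [D_uniq sub_D ->]] := subset_sums m.+1 le_m.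
exists (fun d => d \in D : nat); rewrite sum_subset_indicator //.
by split=> // d _; case: (d \in D).
Qed.

End BoundedSubsetSums.

Theorem corollary5p6 (n : nat) :
  lambda_star_practical n -> lambda_practical n.
Proof.
move=> [n_gt0 subset_sums]; split=> // m /andP[_ le_m_n].
set k := fun d => totient d %/ carmichael d.
have div_gt0 d : d \in divisors n -> 0 < d.
  by rewrite -dvdn_divisors //; apply: dvdn_gt0.
have lam_k : {in divisors n, forall d, carmichael d * k d = totient d}.
  by move=> d /div_gt0 d_gt0; rewrite mulnC divnK ?carmichael_dvd_totient.
have k_gt0 : {in divisors n, forall d, 0 < 1 <= k d}.
  move=> d /div_gt0 d_gt0; rewrite /k divn_gt0 ?carmichael_gt0 //.
  by apply: dvdn_leq; rewrite ?totient_gt0 ?carmichael_dvd_totient.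
have uniq_div := divisors_uniq n.
apply: (complete_raise uniq_div k_gt0 (complete_ones uniq_div subset_sums)).
by rewrite /capacity_sum (eq_big_seq _ lam_k) sum_totient_divisors.
Qed.
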